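(* Let $F$ be a field, $A$ a finitely generated free abelian group and $F * A$ a twisted group algebra of $A$ over $F$. Then $F * A$ has center exactly $F$ if and only if for every subgroup $A_1 \le A$ of finite index in $A$ the twisted group algebra $F * A_1$ has center $F$.
   Context: A twisted group algebra $F * A$ of a finitely generated free abelian group $A$ over a field $F$ is an associative $F$-algebra with an $F$-basis $\{\bar a : a \in A\}$ (a copy of $A$) such that $\bar a_1 \bar a_2 = \tau(a_1,a_2)\overline{a_1a_2}$ for all $a_1,a_2\in A$, where $\tau : A\times A \to F\setminus\{0\}$ satisfies $\tau(a_1,a_2)\tau(a_1a_2,a_3)=\tau(a_2,a_3)\tau(a_1,a_2a_3)$. For a subgroup $B \le A$, $F * B$ denotes the subalgebra of $F * A$ spanned by $\{\bar b : b \in B\}$; it is a twisted group algebra of $B$. *)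

From HB Require Import structures.
From mathcomp Require Import all_boot all_order all_algebra.
From mathcomp Require Import finmap.
Set Implicit Arguments. Unset Strict Implicit. Unset Printing Implicit Defensive.
Import Order.TTheory GRing.Theory Num.Theory.
Local Open Scope ring_scope.

(* The finitely generated free abelian group A is Z^n, written additively as
   row vectors 'rV[int]_n.  The basis element \bar a of F*A is the
   indicator of a; a general element of F*A is a finitely supported
   function A -> F, i.e. an element of {fsfun A -> F with 0}. *)
Notation zgrp n := 'rV[int]_n.
Notation tga F n := {fsfun zgrp n -> F with 0}.

Definition twisting (F : fieldType) (n : nat) (tau : zgrp n -> zgrp n -> F) :=
  (forall a b, tau a b != 0) /\
  (forall a1 a2 a3,
     tau a1 a2 * tau (a1 + a2) a3 = tau a2 a3 * tau a1 (a2 + a3)).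

(* Multiplication of F*A:  (sum x_a \bar a)(sum y_b \bar b)
   = sum_{a,b} x_a y_b tau(a,b) \bar{a+b}; returned as a function A -> F
   (coefficient of \bar c). *)
Definition tga_mul (F : fieldType) (n : nat) (tau : zgrp n -> zgrp n -> F)
  (x y : tga F n) : zgrp n -> F :=
  fun c => \sum_(a <- finsupp x) \sum_(b <- finsupp y | a + b == c)
             x a * y b * tau a b.

Definition is_subgroup (n : nat) (B : {pred zgrp n}) :=
  (0 \in B) /\ (forall a b, a \in B -> b \in B -> a - b \in B).

Definition finite_index (n : nat) (B : {pred zgrp n}) :=
  exists s : seq (zgrp n), forall a, exists2 r, r \in s & a - r \in B.

Definition in_tga_sub (F : fieldType) (n : nat) (B : {pred zgrp n})
  (x : tga F n) := forall a, a \notin B -> x a = 0.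

(* Z(F*B) = F: an element of F*B is central in F*B iff it lies in
   F = F . 1 = F . \bar 0  (the unit of F*B is tau(0,0)^{-1} \bar 0),
   i.e. iff it is supported on {0}. *)
Definition center_is_F (F : fieldType) (n : nat) (tau : zgrp n -> zgrp n -> F)
  (B : {pred zgrp n}) :=
  forall x : tga F n, in_tga_sub B x ->
    ((forall y : tga F n, in_tga_sub B y -> tga_mul tau x y =1 tga_mul tau y x)
     <-> (forall a, a != 0 -> x a = 0)).

From HB Require Import structures.
From mathcomp Require Import all_boot all_order all_algebra.
From mathcomp Require Import finmap ring.
Set Implicit Arguments. Unset Strict Implicit. Unset Printing Implicit Defensive.
Import GRing.Theory Num.Theory.
Local Open Scope ring_scope.

(* The commutation factor lambda(a, b) = tau(a, b) / tau(b, a) of a 2-cocycle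
   is multiplicative in each argument, \bar a commutes with \bar b iff
   lambda(a, b) = 1, and an element supported on {c} is central as soon as
   lambda(c, _) is trivial.  If a central element of F*A1 has a nonzero
   coefficient at a != 0, testing it against the \bar b with b in A1 gives
   lambda(a, _) = 1 on A1.  If N elements represent all cosets of A1, every e
   has a multiple k e in A1 with 0 < k <= N, so
   lambda(N! a, e) = lambda(a, k e)^(N!/k) = 1: \bar(N! a) is central in F*A,
   and it is not a scalar because A is torsion-free.  The converse is the
   case A1 = A. *)

Section FiniteIndex.
Variables (G : zmodType) (B : {pred G}) (s : seq G).
Hypothesis B_subr : forall a b, a \in B -> b \in B -> a - b \in B.
Hypothesis s_transversal : forall a, exists2 r, r \in s & a - r \in B.

Lemma finite_index_mulrn_mem b : exists2 k, (0 < k <= size s)%N & b *+ k \in B.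
Proof.
(* Two of b *+ 0, ..., b *+ N lie in the same coset. *)
pose rep i := find (fun r => b *+ i - r \in B) s.
have has_rep i : has (fun r => b *+ i - r \in B) s.
  by have [r ??] := s_transversal (b *+ i); apply/hasP; exists r.
have rep_lt i : (rep i < size s)%N by rewrite -has_find.
pose idx (i : 'I_(size s).+1) := Ordinal (rep_lt i).
have [i [j [lt_ij eq_rep]]] : exists i j : 'I_(size s).+1, (i < j)%N /\ rep i = rep j.
  have /injectivePn [i [j neq_ij /(congr1 val) eq_rep]] : ~~ injectiveb idx.
    by apply/injectiveP => /leq_card; rewrite !card_ord ltnn.
  case: (ltngtP i j) neq_ij => [?|?|/val_inj->]; last by rewrite eqxx.
    by exists i, j.
  by exists j, i.
exists (j - i)%N; first by rewrite subn_gt0 lt_ij (leq_trans (leq_subr _ _)) // -ltnS.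
have := nth_find 0 (has_rep j); rewrite -/(rep j) -eq_rep => mem_j.
have := B_subr mem_j (nth_find 0 (has_rep i)).
by rewrite opprB addrA subrK -mulrnBr // ltnW.
Qed.

End FiniteIndex.

Section CommutationFactor.
Variables (F : fieldType) (G : zmodType) (tau : G -> G -> F).
Hypothesis tau_neq0 : forall a b, tau a b != 0.
Hypothesis tau_cocycle : forall a1 a2 a3,
  tau a1 a2 * tau (a1 + a2) a3 = tau a2 a3 * tau a1 (a2 + a3).

Definition twist_comm a b := tau a b / tau b a.

Lemma twist_comm_eq1 a b : (twist_comm a b == 1) = (tau a b == tau b a).
Proof.
by rewrite /twist_comm; apply/eqP/eqP => [/divr1_eq | ->]; last by rewrite divff.
Qed.

Lemma twist_commDl a1 a2 b : twist_comm (a1 + a2) b = twist_comm a1 b * twist_comm a2 b.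
Proof.
have E1 := tau_cocycle a1 a2 b; have E2 := tau_cocycle b a1 a2.
have E3 := tau_cocycle a1 b a2.
rewrite [b + a1]addrC in E2; rewrite [b + a2]addrC in E3.
have eP : tau (a1 + a2) b = tau a2 b * tau a1 (a2 + b) / tau a1 a2.
  by apply: (mulfI (tau_neq0 a1 a2)); rewrite E1; field; rewrite tau_neq0.
have eQ : tau b (a1 + a2) = tau b a1 * tau (a1 + b) a2 / tau a1 a2.
  by apply: (mulfI (tau_neq0 a1 a2)); rewrite -E2; field; rewrite tau_neq0.
have eR : tau a1 (a2 + b) = tau a1 b * tau (a1 + b) a2 / tau b a2.
  by apply: (mulfI (tau_neq0 b a2)); rewrite -E3; field; rewrite tau_neq0.
by rewrite /twist_comm eP eQ eR; field; rewrite !tau_neq0.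
Qed.

Lemma tau0_sym b : tau 0 b = tau b 0.
Proof.
have := tau_cocycle 0 0 b; rewrite !add0r => /(mulIf (tau_neq0 0 b)) <-.
by have := tau_cocycle b 0 0; rewrite !addr0 => /(mulIf (tau_neq0 b 0)).
Qed.

Lemma twist_commMnl a b k : twist_comm (a *+ k) b = twist_comm a b ^+ k.
Proof.
elim: k => [|k IHk]; last by rewrite mulrS twist_commDl IHk exprS.
by rewrite mulr0n expr0 /twist_comm tau0_sym divff.
Qed.

Lemma twist_commMnr a b k : twist_comm a (b *+ k) = twist_comm a b ^+ k.
Proof.
have twist_commV x y : twist_comm x y = (twist_comm y x)^-1.
  by rewrite /twist_comm invf_div.
by rewrite twist_commV twist_commMnl -exprVn -twist_commV.
Qed.

Lemma twist_comm_mulrn_fact_eq1 (B : {pred G}) (s : seq G) a :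
    (forall x y, x \in B -> y \in B -> x - y \in B) ->
    (forall x, exists2 r, r \in s & x - r \in B) ->
    (forall b, b \in B -> twist_comm a b = 1) ->
  forall e, twist_comm (a *+ (size s)`!) e = 1.
Proof.
move=> B_subr s_transversal commB e; rewrite twist_commMnl.
have [k /andP[k_gt0 le_k_s] ke_B] := finite_index_mulrn_mem B_subr s_transversal e.
have /dvdnP [q ->] : (k %| (size s)`!)%N by rewrite dvdn_fact ?k_gt0.
by rewrite mulnC exprM -twist_commMnr commB // expr1n.
Qed.

End CommutationFactor.

Lemma big_finsupp1 (K : choiceType) (V : eqType) (d : V) (R : nmodType)
    (f : {fsfun K -> V with d}) (H : K -> R) c :
  (forall k, k != c -> H k = 0) -> (f c = d -> H c = 0) ->
  \sum_(k <- finsupp f) H k = H c.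
Proof.
move=> H_off H_c; have [c_supp | c_nsupp] := boolP (c \in finsupp f).
  rewrite (big_rem c) //= big1_seq ?addr0 // => k /andP[_ k_in]; apply: H_off.
  by apply: contraTneq k_in => ->; rewrite mem_rem_uniqF ?fset_uniq.
rewrite big1_seq ?H_c ?fsfun_dflt // => k /andP[_ k_in]; apply: H_off.
by apply: contraNneq c_nsupp => <-.
Qed.

Lemma zgrp_mulrn_eq0 n (a : zgrp n) k : (a *+ k == 0) = (k == 0%N) || (a == 0).
Proof.
case: k => [|k] /=; first by rewrite mulr0n eqxx.
apply/eqP/eqP => [ak0 | ->]; last by rewrite mul0rn.
apply/rowP => j; have /eqP := congr1 (fun v : zgrp n => v 0 j) ak0.
by rewrite /= mulmxnE !mxE mulrn_eq0 => /eqP.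
Qed.

Section TwistedGroupAlgebra.
Context {F : fieldType} {n : nat}.
Variable tau : zgrp n -> zgrp n -> F.

Lemma tga_mulEl (x y : tga F n) d :
  tga_mul tau x y d = \sum_(a <- finsupp x) x a * y (d - a) * tau a (d - a).
Proof.
apply: eq_bigr => a _; rewrite (eq_bigl (fun b => b == d - a)) => [|b]; last first.
  by rewrite [RHS]eq_sym subr_eq eq_sym addrC.
rewrite big_mkcond (big_finsupp1 (c := d - a)) ?eqxx // => [b /negPf -> // | ->].
by rewrite mulr0 mul0r.
Qed.

Lemma tga_mulEr (x y : tga F n) d :
  tga_mul tau x y d = \sum_(b <- finsupp y) x (d - b) * y b * tau (d - b) b.
Proof.
rewrite /tga_mul (exchange_big_dep xpredT) //=; apply: eq_bigr => b _.
rewrite (eq_bigl (fun a => a == d - b)) => [|a]; last first.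
  by rewrite [RHS]eq_sym subr_eq eq_sym.
rewrite big_mkcond (big_finsupp1 (c := d - b)) ?eqxx // => [a /negPf -> // | ->].
by rewrite !mul0r.
Qed.

Lemma tga_mul_supp1l (x y : tga F n) c : (forall a, a != c -> x a = 0) ->
  tga_mul tau x y =1 fun d => x c * y (d - c) * tau c (d - c).
Proof.
move=> x_off d; rewrite tga_mulEl.
by apply: big_finsupp1 => [a /x_off|] ->; rewrite !mul0r.
Qed.

Lemma tga_mul_supp1r (x y : tga F n) c : (forall b, b != c -> y b = 0) ->
  tga_mul tau x y =1 fun d => x (d - c) * y c * tau (d - c) c.
Proof.
move=> y_off d; rewrite tga_mulEr.
by apply: big_finsupp1 => [b /y_off|] ->; rewrite mulr0 mul0r.
Qed.

Lemma tga_mul_supp1C (x y : tga F n) c : (forall a, a != c -> x a = 0) ->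
  (forall e, tau c e = tau e c) -> tga_mul tau x y =1 tga_mul tau y x.
Proof.
move=> x_off c_sym d.
by rewrite (tga_mul_supp1l _ x_off) (tga_mul_supp1r _ x_off) c_sym (mulrC (x c)).
Qed.

Definition tga_bar (c : zgrp n) : tga F n := [fsfun a in [fset c]%fset => 1 | 0].

Lemma tga_barE c a : tga_bar c a = (a == c)%:R.
Proof. by rewrite /tga_bar fsfunE inE; case: eqP. Qed.

Lemma tga_bar_off c a : a != c -> tga_bar c a = 0.
Proof. by rewrite tga_barE => /negPf ->. Qed.

Lemma tga_bar_sub (B : {pred zgrp n}) c : c \in B -> in_tga_sub B (tga_bar c).
Proof. by move=> cB a aB; apply: tga_bar_off; apply: contraNneq aB => ->. Qed.

Lemma tga_mul_barC_tau (x : tga F n) a b :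
  tga_mul tau x (tga_bar b) =1 tga_mul tau (tga_bar b) x -> x a != 0 ->
  tau a b = tau b a.
Proof.
move=> /(_ (a + b)).
have bar_b_off := tga_bar_off (c := b).
rewrite (tga_mul_supp1r _ bar_b_off) (tga_mul_supp1l _ bar_b_off).
by rewrite !tga_barE eqxx addrK mulr1 mul1r => /[swap] /mulfI; apply.
Qed.

End TwistedGroupAlgebra.

Unset Implicit Arguments.
Theorem proposition2p1 (F : fieldType) (n : nat)
  (tau : 'rV[int]_n -> 'rV[int]_n -> F) :
  twisting tau ->
  (center_is_F tau (fun _ => true) <->
   (forall A1 : {pred 'rV[int]_n}, is_subgroup A1 -> finite_index A1 ->
      center_is_F tau A1)).
Proof.
move=> [tau_neq0 tau_cocycle].
split=> [centerA A1 [_ A1_subr] [s s_transversal] | centerA1]; last first.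
  by apply: centerA1; [split | exists [:: 0] => a; exists 0; rewrite ?mem_head].
move=> x _; split=> [x_central a a_neq0 | x_supp0 y _]; last first.
  exact: tga_mul_supp1C x_supp0 (tau0_sym tau_neq0 tau_cocycle).
case: (eqVneq (x a) 0) => // xa_neq0; exfalso.
have twist_comm_a b : b \in A1 -> twist_comm tau a b = 1.
  move=> bA1; apply/eqP; rewrite twist_comm_eq1 //; apply/eqP.
  by apply: tga_mul_barC_tau xa_neq0; apply: x_central; apply: tga_bar_sub.
pose c := a *+ (size s)`!.
have c_sym e : tau c e = tau e c.
  apply/eqP; rewrite -twist_comm_eq1 //; apply/eqP.
  exact: (twist_comm_mulrn_fact_eq1 tau_neq0 tau_cocycle A1_subr s_transversal
            twist_comm_a).
have c_neq0 : c != 0 by rewrite zgrp_mulrn_eq0 negb_or -lt0n fact_gt0.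
have bar_c_central y : in_tga_sub xpredT y ->
    tga_mul tau (tga_bar c) y =1 tga_mul tau y (tga_bar c).
  by move=> _; apply: tga_mul_supp1C c_sym; apply: tga_bar_off.
have := (centerA (tga_bar c) (tga_bar_sub (B := xpredT) isT)).1 bar_c_central c c_neq0.
by rewrite tga_barE eqxx => /eqP; rewrite oner_eq0.
Qed.
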